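(* There exist a separable Hilbert space $\mathcal{H}$, a finite collection $\mathcal{A}=\{A_1,\dots,A_K\}$ of self-adjoint operators, a nonnegative lower semicontinuous cost $c:\mathbb{R}^K\times\mathbb{R}^K\to[0,\infty)$, and states $\rho,\omega\in\mathcal{S}(\mathcal{H})$ such that $$\inf\Big\{\mathrm{tr}\big[\Gamma C_c^{(\mathcal{A})}\big]\ \Big|\ \Gamma\in\mathcal{S}\big((\mathcal{H}\otimes\mathcal{H}^* )^{\otimes K}\big),\ (\Gamma)_{2k-1}=\omega,\ (\Gamma)_{2k}=\rho^T\ \forall k\Big\}<\inf\Big\{\mathrm{tr}\big[\Pi^{\otimes K}C_c^{(\mathcal{A})}\big]\ \Big|\ \Pi\in\mathcal{C}(\rho,\omega)\Big\}.$$
   Context: $\mathcal{H}^*$ is the dual of $\mathcal{H}$; $A^T$ is the operator on $\mathcal{H}^*$ with $(A^T\eta)(\varphi)=\eta(A\varphi)$. $\mathcal{S}(\mathcal{K})$ is the set of states on $\mathcal{K}$. $\mathcal{C}(\rho,\omega)=\{\Pi\in\mathcal{S}(\mathcal{H}\otimes\mathcal{H}^* ):\mathrm{tr}_{\mathcal{H}^*}[\Pi]=\omega,\ \mathrm{tr}_{\mathcal{H}}[\Pi]=\rho^T\}$. With $E_k$ the spectral measure of $A_k$, $C_c^{(\mathcal{A})}=\iint c(x_1,\dots,x_K,y_1,\dots,y_K)\,dE_1(y_1)\otimes dE_1^T(x_1)\otimes\cdots\otimes dE_K(y_K)\otimes dE_K^T(x_K)$ on $(\mathcal{H}\otimes\mathcal{H}^*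 )^{\otimes K}$, where $\Pi^{\otimes K}$ is viewed as an operator on $(\mathcal{H}\otimes\mathcal{H}^* )^{\otimes K}$. Numbering the $2K$ tensor factors $1,\dots,2K$, $(\Gamma)_{2k-1}$ (resp. $(\Gamma)_{2k}$) is the partial trace of $\Gamma$ over all factors except the $(2k-1)$-th (resp. $2k$-th). *)

From HB Require Import structures.
From mathcomp Require Import all_boot all_order all_algebra.
From mathcomp Require Import all_classical all_reals all_analysis.
From mathcomp Require Import complex.
Set Implicit Arguments. Unset Strict Implicit. Unset Printing Implicit Defensive.
Import Order.TTheory GRing.Theory Num.Theory.
Import numFieldNormedType.Exports.
Local Open Scope ring_scope.

(* Finite-dimensional model: H = C^n with orthonormal basis indexed by 'I_n;
   the dual H^* is identified with C^n via the dual basis.  An operator on a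
   finite-dimensional Hilbert space with orthonormal basis indexed by the
   finType T is given by its matrix entries  M i j = <e_i, M e_j>. *)
Definition Op (R : realType) (T : finType) := T -> T -> R[i].

Section QOT.
Variable R : realType.
Local Notation C := R[i].

Definition opmul (T : finType) (M N : Op R T) : Op R T :=
  fun i j => \sum_(l : T) M i l * N l j.

Definition optrace (T : finType) (M : Op R T) : C := \sum_(i : T) M i i.

Definition optr (T : finType) (M : Op R T) : Op R T := fun i j => M j i.

Definition selfadjoint (T : finType) (M : Op R T) : Prop :=
  forall i j, M j i = conjc (M i j).

Definition psd (T : finType) (M : Op R T) : Prop :=
  forall v : T -> C, 0 <= \sum_(i : T) \sum_(j : T) conjc (v i) * M i j * v j.

Definition is_state (T : finType) (M : Op R T) : Prop :=
  psd M /\ optrace M = 1.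

(* Spectral measure of a self-adjoint A on C^n, given as a projection-valued
   measure  E(B) = \sum_(j | lam j \in B) P j  with P j mutually orthogonal
   orthogonal projections summing to the identity and A = \int x dE(x). *)
Definition spectral_resolution (n : nat) (A : Op R 'I_n)
  (lam : 'I_n -> R) (P : 'I_n -> Op R 'I_n) : Prop :=
  [/\ forall j, selfadjoint (P j),
      forall j, opmul (P j) (P j) = P j,
      forall j j', j != j' -> opmul (P j) (P j') = (fun _ _ => 0),
      (fun a b => \sum_(j : 'I_n) P j a b) = (fun a b => (a == b)%:R)
    & A = (fun a b => \sum_(j : 'I_n) ((lam j)%:C)%C * P j a b)].

(* basis index of (H (x) H^* )^{(x) K}: for each k, the pair
   (index in the (2k-1)-th factor H, index in the 2k-th factor H^* ) *)
Definition idx (n K : nat) := {ffun 'I_K -> 'I_n * 'I_n}.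

Definition upd (n K : nat) (i : idx n K) (k : 'I_K) (p : 'I_n * 'I_n) : idx n K :=
  [ffun l => if l == k then p else i l].

(* (Gamma)_{2k-1}: partial trace over all factors but the (2k-1)-th (a copy of H) *)
Definition marg_odd (n K : nat) (G : Op R (idx n K)) (k : 'I_K) : Op R 'I_n :=
  fun a b => \sum_(i : idx n K | (i k).1 == a) G i (upd i k (b, (i k).2)).

(* (Gamma)_{2k}: partial trace over all factors but the 2k-th (a copy of H^* ) *)
Definition marg_even (n K : nat) (G : Op R (idx n K)) (k : 'I_K) : Op R 'I_n :=
  fun x x' => \sum_(i : idx n K | (i k).2 == x) G i (upd i k ((i k).1, x')).

Definition ptr_dual (n : nat) (Pi : Op R ('I_n * 'I_n)%type) : Op R 'I_n :=
  fun a b => \sum_(x : 'I_n) Pi (a, x) (b, x).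
Definition ptr_H (n : nat) (Pi : Op R ('I_n * 'I_n)%type) : Op R 'I_n :=
  fun x x' => \sum_(a : 'I_n) Pi (a, x) (a, x').

Definition couplings (n : nat) (rho omega : Op R 'I_n) : set (Op R ('I_n * 'I_n)%type) :=
  [set Pi | is_state Pi /\ ptr_dual Pi = omega /\ ptr_H Pi = optr rho].

Definition tenspow (n K : nat) (Pi : Op R ('I_n * 'I_n)%type) : Op R (idx n K) :=
  fun i j => \prod_(k : 'I_K) Pi (i k) (j k).

(* C_c^{(A)} = \int c(x_1..x_K, y_1..y_K)
      dE_1(y_1) (x) dE_1^T(x_1) (x) ... (x) dE_K(y_K) (x) dE_K^T(x_K),
   with E_k the spectral measure described by (lam k, P k). *)
Definition Ccost (n K : nat) (lam : 'I_K -> 'I_n -> R) (P : 'I_K -> 'I_n -> Op R 'I_n)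
  (c : 'rV[R]_K * 'rV[R]_K -> R) : Op R (idx n K) :=
  fun i j => \sum_(a : {ffun 'I_K -> 'I_n}) \sum_(b : {ffun 'I_K -> 'I_n})
     ((c (\row_k lam k (b k), \row_k lam k (a k)))%:C)%C *
     \prod_(k : 'I_K) (P k (a k) (i k).1 (j k).1 * optr (P k (b k)) (i k).2 (j k).2).

Definition value_free (n K : nat) (rho omega : Op R 'I_n) (Cc : Op R (idx n K)) : R :=
  inf [set t : R | exists G : Op R (idx n K),
        [/\ is_state G, forall k, marg_odd G k = omega,
            forall k, marg_even G k = optr rho
          & t = complex.Re (optrace (opmul G Cc))]].

Definition value_prod (n K : nat) (rho omega : Op R 'I_n) (Cc : Op R (idx n K)) : R :=
  inf [set t : R | exists Pi, couplings rho omega Pi /\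
        t = complex.Re (optrace (opmul (@tenspow n K Pi) Cc))].

End QOT.

From HB Require Import structures.
From mathcomp Require Import all_boot all_order all_algebra.
From mathcomp Require Import all_classical all_reals all_analysis.
From mathcomp Require Import complex.
From mathcomp Require Import ring lra.
Import Order.TTheory GRing.Theory Num.Theory.
Import numFieldNormedType.Exports.
Local Open Scope ring_scope.

(* A state on the 2K factors only has to reproduce the one-body marginals, so
   it may copy one classical coupling pi of omega and rho^T into all K slots,
   Gamma = sum_p pi_p |p,...,p><p,...,p|.  For a cost that penalises
   disagreement between the K outcomes on the dual factors such a copy costs
   nothing.  A product Pi^(x)K instead makes these K outcomes independent, each
   distributed according to the diagonal of rho^T; for rho = 1/2 on C^2 two
   independent outcomes disagree with probability 1/2.  All operators involved
   are diagonal in the standard basis, so the computation is classical. *)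

Set Implicit Arguments. Unset Strict Implicit. Unset Printing Implicit Defensive.

Lemma sum_delta_l (R : pzSemiRingType) (T : finType) (a : T) (F : T -> R) :
  \sum_j (a == j)%:R * F j = F a.
Proof.
rewrite (bigD1 a) //= big1 => [|j /negbTE aj]; first by rewrite eqxx mul1r addr0.
by rewrite eq_sym aj mul0r.
Qed.

Lemma sum_natb_eq (R : pzSemiRingType) (T : finType) (P : pred T) (a : T) :
  \sum_(i | P i) (i == a)%:R = (P a)%:R :> R.
Proof.
case: (boolP (P a)) => Pa; last first.
  by rewrite big1 // => i Pi; case: eqVneq => // ia; move: Pa; rewrite -ia Pi.
by rewrite (bigD1 a) //= eqxx big1 ?addr0 // => i /andP[_ /negbTE ->].
Qed.

Lemma prod_delta (R : comPzSemiRingType) (I T : finType) (f : I -> T) (g : {ffun I -> T}) :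
  \prod_k (f k == g k)%:R = ([ffun k => f k] == g)%:R :> R.
Proof.
case: ([ffun k => f k] =P g) => [<-|fg]; first by rewrite big1 // => k _; rewrite ffunE eqxx.
have [k /negbTE fgk] : exists k, f k != g k.
  apply/existsP; rewrite -negb_forall; apply/negP => /forallP fg_eq.
  by apply: fg; apply/ffunP => k; rewrite ffunE; exact/eqP/fg_eq.
by rewrite (bigD1 k) //= fgk mul0r.
Qed.

Lemma sum_pair_fst (R : pzSemiRingType) (T1 T2 : finType) (a : T1) (F : T1 * T2 -> R) :
  \sum_(p | p.1 == a) F p = \sum_x F (a, x).
Proof.
rewrite -(big_pred1_eq +%R a (fun b => \sum_x F (b, x))) pair_big_dep /=.
by apply: eq_big => [[b x]|[b x] _] //=; rewrite andbT.
Qed.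

Lemma sum_pair_snd (R : pzSemiRingType) (T1 T2 : finType) (x : T2) (F : T1 * T2 -> R) :
  \sum_(p | p.2 == x) F p = \sum_a F (a, x).
Proof.
under [RHS]eq_bigr => a _ do rewrite -(big_pred1_eq +%R x (fun y => F (a, y))).
by rewrite pair_big_dep /=; apply: eq_big => [[a y]|[a y] _].
Qed.

Lemma ord2P (k : 'I_2) : k = ord0 \/ k = ord_max.
Proof. by case: k => [[|[|k]] Hk]; [left|right|]; rewrite //; exact: val_inj. Qed.

Lemma sum_ord2 (V : nmodType) (F : 'I_2 -> V) : \sum_(x < 2) F x = F ord0 + F ord_max.
Proof. by rewrite !big_ord_recl big_ord0 addr0; congr (_ + F _); exact: val_inj. Qed.

Lemma sum_ffun_ord2 (T : finType) (V : nmodType) (F : {ffun 'I_2 -> T} -> V) :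
  \sum_f F f = \sum_x \sum_y F [ffun k => if k == ord0 then x else y].
Proof.
pose ffun2 (p : T * T) := [ffun k : 'I_2 => if k == ord0 then p.1 else p.2].
rewrite pair_bigA /= (reindex ffun2) //=.
exists (fun f => (f ord0, f ord_max)) => [[x y] _|f _] /=; first by rewrite !ffunE.
by apply/ffunP => k; rewrite ffunE; case: (ord2P k) => ->.
Qed.

Section DiagonalOperators.
Variables (R : realType) (T : finType).
Local Notation C := R[i].
Implicit Types (d e : T -> C).

Definition diagop d : Op R T := fun i j => (i == j)%:R * d i.

Lemma trace_diagop d : optrace (diagop d) = \sum_i d i.
Proof. by apply: eq_bigr => i _; rewrite /diagop eqxx mul1r. Qed.

Lemma diagop_state d : (forall i, 0 <= d i) -> \sum_i d i = 1 -> is_state (diagop d).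
Proof.
move=> d_ge0 d_sum1; split; last by rewrite trace_diagop.
move=> v; apply: sumr_ge0 => i _.
rewrite (bigD1 i) //= big1 => [|j /negbTE ji]; last first.
  by rewrite /diagop eq_sym ji mul0r mulr0 mul0r.
rewrite addr0 /diagop eqxx mul1r mulrAC.
by apply: mulr_ge0 => //; rewrite mulrC; exact: mul_conjC_ge0.
Qed.

Lemma trace_mul_diagop (M : Op R T) d : optrace (opmul M (diagop d)) = \sum_i M i i * d i.
Proof.
apply: eq_bigr => i _; rewrite /opmul (bigD1 i) //= big1 ?addr0 => [|l li].
  by rewrite /diagop eqxx mul1r.
by rewrite /diagop (negbTE li) mul0r mulr0.
Qed.

Lemma opmul_diagop d e : opmul (diagop d) (diagop e) = diagop (fun i => d i * e i).
Proof.
apply/funext => i; apply/funext => j; rewrite /opmul /diagop.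
by under eq_bigr do rewrite -mulrA; rewrite sum_delta_l mulrCA.
Qed.

Lemma optr_diagop d : optr (diagop d) = diagop d.
Proof.
apply/funext => i; apply/funext => j; rewrite /optr /diagop eq_sym.
by case: eqVneq => [->|]; rewrite ?mul0r.
Qed.

End DiagonalOperators.

Section CoordinateProjections.
Variables (R : realType) (n : nat).

Definition coord_proj (j : 'I_n) : Op R 'I_n := fun a b => ((a == j) && (b == j))%:R.

Lemma coord_projM (j a b : 'I_n) : coord_proj j a b = (a == j)%:R * (b == j)%:R.
Proof. by rewrite /coord_proj -mulnb natrM. Qed.

Lemma coord_projE (j : 'I_n) : coord_proj j = diagop (fun a => (a == j)%:R).
Proof.
apply/funext => a; apply/funext => b; rewrite /coord_proj /diagop.
case: (eqVneq a b) => [<-|ab]; first by rewrite andbb mul1r.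
by rewrite mul0r; case: eqP => //= <-; rewrite eq_sym (negbTE ab).
Qed.

Lemma diagop_spectral_resolution (lam : 'I_n -> R) :
  spectral_resolution (diagop (fun j => ((lam j)%:C)%C)) lam coord_proj.
Proof.
split.
- by move=> j a b; rewrite /coord_proj conjc_nat andbC.
- move=> j; rewrite coord_projE opmul_diagop; congr diagop.
  by apply/funext => a; case: (a == j); rewrite /= ?mulr1 ?mul0r.
- move=> j j' jj'; rewrite !coord_projE opmul_diagop.
  apply/funext => a; apply/funext => b; rewrite /diagop.
  by case: (eqVneq a j) => [->|]; rewrite ?(negbTE jj') ?mul0r ?mulr0.
- apply/funext => a; apply/funext => b; rewrite /diagop.
  under eq_bigr do rewrite coord_projE /diagop.
  under eq_bigr => j _ do rewrite -[(a == j)%:R]mulr1.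
  by rewrite -big_distrr /= sum_delta_l mulr1.
- apply/funext => a; apply/funext => b; rewrite /diagop.
  under [RHS]eq_bigr do rewrite coord_projE /diagop mulrC -mulrA.
  by rewrite -big_distrr /= sum_delta_l.
Qed.

Lemma diagop_real_selfadjoint (lam : 'I_n -> R) :
  selfadjoint (diagop (fun j => ((lam j)%:C)%C)).
Proof.
move=> a b; rewrite /diagop rmorphM rmorph_nat /= [X in _ = _ * X]conjc_real.
by case: (eqVneq a b) => [->|ab] //; rewrite !mul0r.
Qed.

End CoordinateProjections.

Section IndexedOperators.
Variables (R : realType) (n K : nat).
Local Notation C := R[i].

Definition idx_fst (i : idx n K) : {ffun 'I_K -> 'I_n} := [ffun k => (i k).1].
Definition idx_snd (i : idx n K) : {ffun 'I_K -> 'I_n} := [ffun k => (i k).2].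

Lemma idx_eqE (i j : idx n K) :
  (i == j) = (idx_fst i == idx_fst j) && (idx_snd i == idx_snd j).
Proof.
apply/eqP/andP => [-> //|[/eqP/ffunP e1 /eqP/ffunP e2]].
apply/ffunP => k; have := e1 k; have := e2 k; rewrite !ffunE.
by case: (i k) (j k) => [? ?] [? ?] /= -> ->.
Qed.

Lemma Ccost_coord_proj (lam : 'I_K -> 'I_n -> R) (c : 'rV[R]_K * 'rV[R]_K -> R) :
  Ccost lam (fun=> @coord_proj R n) c =
  diagop (fun i : idx n K => ((c (\row_k lam k (i k).2, \row_k lam k (i k).1))%:C)%C).
Proof.
apply/funext => i; apply/funext => j; rewrite /Ccost /diagop idx_eqE -mulnb natrM.
set fi := idx_fst i; set fj := idx_fst j; set si := idx_snd i; set sj := idx_snd j.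
have prod_deltas (a b : {ffun 'I_K -> 'I_n}) :
    \prod_k (coord_proj R (a k) (i k).1 (j k).1 * optr (coord_proj R (b k)) (i k).2 (j k).2)
    = (fi == a)%:R * (fj == a)%:R * ((sj == b)%:R * (si == b)%:R).
  by rewrite /optr; under eq_bigr do rewrite !coord_projM; rewrite !big_split /= !prod_delta.
transitivity (\sum_a (fi == a)%:R * \sum_b (si == b)%:R *
    ((fj == a)%:R * (sj == b)%:R * ((c (\row_k lam k (b k), \row_k lam k (a k)))%:C)%C)).
  apply: eq_bigr => a _; rewrite big_distrr; apply: eq_bigr => b _ /=.
  by rewrite prod_deltas; ring.
under eq_bigr do rewrite sum_delta_l.
rewrite sum_delta_l [fj == fi]eq_sym [sj == si]eq_sym.
by congr (_ * ((c (_, _))%:C)%C); apply/rowP => k; rewrite !mxE ffunE.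
Qed.

Lemma upd_eq (i : idx n K) k p : (i == upd i k p) = (i k == p).
Proof.
apply/eqP/eqP => [->|<-]; first by rewrite /upd ffunE eqxx.
by apply/ffunP => l; rewrite /upd ffunE; case: eqP => // ->.
Qed.

Lemma marg_odd_diagop (g : idx n K -> C) k :
  marg_odd (diagop g) k = diagop (fun a => \sum_(i : idx n K | (i k).1 == a) g i).
Proof.
apply/funext => a; apply/funext => b; rewrite /marg_odd /diagop big_distrr /=.
apply: eq_bigr => i /eqP <-; rewrite upd_eq.
by case: (i k) => x y; rewrite xpair_eqE eqxx andbT eq_sym.
Qed.

Lemma marg_even_diagop (g : idx n K -> C) k :
  marg_even (diagop g) k = diagop (fun x => \sum_(i : idx n K | (i k).2 == x) g i).
Proof.
apply/funext => x; apply/funext => x'; rewrite /marg_even /diagop big_distrr /=.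
apply: eq_bigr => i /eqP <-; rewrite upd_eq.
by case: (i k) => a y; rewrite xpair_eqE eqxx eq_sym.
Qed.

Lemma trace_tenspow_diagop_snd (Pi : Op R ('I_n * 'I_n)%type)
    (F : {ffun 'I_K -> 'I_n} -> C) :
  optrace (opmul (@tenspow R n K Pi) (diagop (fun i => F (idx_snd i)))) =
  \sum_(s : {ffun 'I_K -> 'I_n}) (\prod_k ptr_H Pi (s k) (s k)) * F s.
Proof.
rewrite trace_mul_diagop /tenspow /ptr_H.
under [RHS]eq_bigr do rewrite bigA_distr_bigA big_distrl /=.
pose pair_idx (p : {ffun 'I_K -> 'I_n} * {ffun 'I_K -> 'I_n}) : idx n K :=
  [ffun k => (p.2 k, p.1 k)].
rewrite pair_big /= (reindex pair_idx) /=.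
  apply: eq_bigr => -[s f] _ /=; congr (_ * F _); last by apply/ffunP => k; rewrite !ffunE.
  by apply: eq_bigr => k _; rewrite ffunE.
exists (fun i => (idx_snd i, idx_fst i)) => [[s f] _|i _] /=.
  by congr pair; apply/ffunP => k; rewrite !ffunE.
by apply/ffunP => k; rewrite !ffunE; case: (i k).
Qed.

End IndexedOperators.

Section DiagonalCouplings.
Variables (R : realType) (n : nat).
Local Notation C := R[i].
Implicit Types (pi : 'I_n * 'I_n -> C) (r w : 'I_n -> C).

Lemma ptr_dual_diagop pi : ptr_dual (diagop pi) = diagop (fun a => \sum_x pi (a, x)).
Proof.
apply/funext => a; apply/funext => b; rewrite /ptr_dual /diagop big_distrr /=.
by apply: eq_bigr => x _; rewrite xpair_eqE eqxx andbT.
Qed.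

Lemma ptr_H_diagop pi : ptr_H (diagop pi) = diagop (fun x => \sum_a pi (a, x)).
Proof.
apply/funext => x; apply/funext => y; rewrite /ptr_H /diagop big_distrr /=.
by apply: eq_bigr => a _; rewrite xpair_eqE eqxx.
Qed.

Lemma diagop_product_coupling r w :
    (forall a, 0 <= r a) -> \sum_a r a = 1 -> (forall a, 0 <= w a) -> \sum_a w a = 1 ->
  couplings (diagop r) (diagop w) (diagop (fun p => w p.1 * r p.2)).
Proof.
move=> r_ge0 r_sum1 w_ge0 w_sum1; split; [|split].
- apply: diagop_state => [p|]; first exact: mulr_ge0.
  by rewrite -(pair_bigA _ (fun a x => w a * r x)) /= -big_distrlr w_sum1 r_sum1 /= mulr1.
- rewrite ptr_dual_diagop; congr diagop; apply/funext => a.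
  by rewrite /= -big_distrr /= r_sum1 mulr1.
- rewrite ptr_H_diagop optr_diagop; congr diagop; apply/funext => x.
  by rewrite /= -big_distrl /= w_sum1 mul1r.
Qed.

End DiagonalCouplings.

Section DiagonalCopies.
Variables (R : realType) (n K : nat).
Local Notation C := R[i].
Implicit Types (pi : 'I_n * 'I_n -> C).

Definition diag_copies pi : Op R (idx n K) :=
  diagop (fun i => \sum_p (i == [ffun=> p])%:R * pi p).

Lemma sum_diag_copies pi (P : pred (idx n K)) :
  \sum_(i | P i) \sum_p (i == [ffun=> p])%:R * pi p = \sum_(p | P [ffun=> p]) pi p.
Proof.
rewrite exchange_big [RHS]big_mkcond /=; apply: eq_bigr => p _.
by rewrite -big_distrl /= sum_natb_eq; case: (P _); rewrite ?mul1r ?mul0r.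
Qed.

Lemma diag_copies_state pi :
  (forall p, 0 <= pi p) -> \sum_p pi p = 1 -> is_state (diag_copies pi).
Proof.
move=> pi_ge0 pi_sum1; apply: diagop_state => [i|].
  by apply: sumr_ge0 => p _; apply: mulr_ge0.
by rewrite (sum_diag_copies pi xpredT).
Qed.

Lemma marg_odd_diag_copies pi k : marg_odd (diag_copies pi) k = ptr_dual (diagop pi).
Proof.
rewrite marg_odd_diagop ptr_dual_diagop; congr diagop; apply/funext => a.
by rewrite sum_diag_copies -sum_pair_fst; apply: eq_bigl => p; rewrite ffunE.
Qed.

Lemma marg_even_diag_copies pi k : marg_even (diag_copies pi) k = ptr_H (diagop pi).
Proof.
rewrite marg_even_diagop ptr_H_diagop; congr diagop; apply/funext => x.
by rewrite sum_diag_copies -sum_pair_snd; apply: eq_bigl => p; rewrite ffunE.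
Qed.

Lemma diag_copies_feasible (rho omega : Op R 'I_n) pi :
    (forall p, 0 <= pi p) -> couplings rho omega (diagop pi) ->
  [/\ is_state (diag_copies pi), forall k, marg_odd (diag_copies pi) k = omega
    & forall k, marg_even (diag_copies pi) k = optr rho].
Proof.
move=> pi_ge0 [[_ tr1] [<- <-]]; split.
- by apply: diag_copies_state => //; rewrite -trace_diagop.
- exact: marg_odd_diag_copies.
- exact: marg_even_diag_copies.
Qed.

Lemma trace_diag_copies pi (f : idx n K -> C) :
  optrace (opmul (diag_copies pi) (diagop f)) = \sum_p pi p * f [ffun=> p].
Proof.
rewrite trace_mul_diagop.
under eq_bigr do rewrite /diag_copies /diagop eqxx mul1r big_distrl.
rewrite exchange_big; apply: eq_bigr => p _ /=.
by under eq_bigr do rewrite -mulrA eq_sym; rewrite sum_delta_l.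
Qed.

End DiagonalCopies.

Arguments diag_copies {R n} K pi.

Local Open Scope classical_set_scope.

(* [inf] of a set that is not bounded below is [0], hence [0 <= t]. *)
Lemma inf_le_nneg (R : realType) (E : set R) (t : R) : E t -> 0 <= t -> inf E <= t.
Proof.
move=> Et t_ge0; have [lbE|nlbE] := pselect (has_lbound E); first exact: (ge_inf lbE Et).
by rewrite inf_out // => -[_ /nlbE].
Qed.

Section Values.
Variables (R : realType) (n K : nat) (rho omega : Op R 'I_n) (Cc : Op R (idx n K)).

Lemma value_free_le (G : Op R (idx n K)) :
    is_state G -> (forall k, marg_odd G k = omega) -> (forall k, marg_even G k = optr rho) ->
    0 <= complex.Re (optrace (opmul G Cc)) ->
  value_free rho omega Cc <= complex.Re (optrace (opmul G Cc)).
Proof. by move=> G_state G_odd G_even val_ge0; apply: inf_le_nneg val_ge0; exists G. Qed.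

Lemma value_prod_ge (b : R) (Pi0 : Op R ('I_n * 'I_n)%type) :
    couplings rho omega Pi0 ->
    (forall Pi, couplings rho omega Pi ->
       b <= complex.Re (optrace (opmul (@tenspow R n K Pi) Cc))) ->
  b <= value_prod rho omega Cc.
Proof.
move=> Pi0_coupling b_lb; apply: lb_le_inf => [|t [Pi [Pi_coupling ->]]]; last exact: b_lb.
by eexists; exists Pi0.
Qed.

End Values.

Lemma continuous_lower_semicontinuous (T : topologicalType) (R : realType) (f : T -> R) :
  continuous f -> lower_semicontinuous (fun x => (f x)%:E).
Proof.
move=> f_cont; apply/lower_semicontinuousP => a.
have -> : [set x | (a%:E < (f x)%:E)%E] = f @^-1` [set y | a < y].
  by apply/seteqP; split => x /=; rewrite lte_fin.
by apply: open_comp => [x _|]; [exact: f_cont | exact: open_gt].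
Qed.

Section Example.
Variable R : realType.
Local Notation C := R[i].

Definition half : C := (((2 : R)^-1)%:C)%C.

Lemma half_ge0 : 0 <= half.
Proof. by rewrite lecE /= eqxx /= invr_ge0 ler0n. Qed.

Lemma half_add : half + half = 1.
Proof.
by rewrite /half -rmorphD -(rmorph1 (real_complex R)); congr (real_complex R _); lra.
Qed.

Definition rho_mixed : Op R 'I_2 := diagop (fun=> half).
Definition omega_pure : Op R 'I_2 := diagop (fun a => (a == ord0)%:R).

Lemma rho_mixed_state : is_state rho_mixed.
Proof. by apply: diagop_state => [_|]; [exact: half_ge0 | rewrite sum_ord2 half_add]. Qed.

Lemma omega_pure_state : is_state omega_pure.
Proof. by apply: diagop_state => [a|]; [rewrite ler0n | rewrite sum_ord2 /= addr0]. Qed.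

Definition pi_product (p : 'I_2 * 'I_2) : C := (p.1 == ord0)%:R * half.

Lemma pi_product_ge0 p : 0 <= pi_product p.
Proof. by apply: mulr_ge0; [exact: ler0n | exact: half_ge0]. Qed.

Lemma pi_product_coupling : couplings rho_mixed omega_pure (diagop pi_product).
Proof.
apply: diagop_product_coupling => [_||a|]; rewrite ?sum_ord2 ?half_add ?ler0n //.
  exact: half_ge0.
by rewrite /= addr0.
Qed.

Definition label (k j : 'I_2) : R := j%:R.

Definition label_obs (k : 'I_2) : Op R 'I_2 := diagop (fun j => ((label k j)%:C)%C).

Definition disagreement_cost (z : 'rV[R]_2 * 'rV[R]_2) : R :=
  (z.1 ord0 ord0 - z.1 ord0 ord_max) * (z.1 ord0 ord0 - z.1 ord0 ord_max).

Lemma disagreement_cost_ge0 z : 0 <= disagreement_cost z.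
Proof. by rewrite /disagreement_cost -expr2 sqr_ge0. Qed.

Lemma disagreement_cost_continuous : continuous disagreement_cost.
Proof.
have coord_cont (m : 'I_2) : continuous (fun z : 'rV[R]_2 * 'rV[R]_2 => z.1 ord0 m).
  move=> z; apply: (@continuous_comp _ _ _ fst (fun M : 'rV[R]_2 => M ord0 m)).
    exact: cvg_fst.
  exact: coord_continuous.
by move=> z; apply: cvgM; apply: cvgB; exact: coord_cont.
Qed.

Lemma sqr_sub_ord2 (x y : 'I_2) : ((x%:R - y%:R) * (x%:R - y%:R) : R) = (x != y)%:R.
Proof. by case: (ord2P x) => ->; case: (ord2P y) => ->; rewrite /=; ring. Qed.

Definition disagreement_op : Op R (idx 2 2) :=
  Ccost label (fun=> @coord_proj R 2) disagreement_cost.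

Lemma disagreement_opE :
  disagreement_op = diagop (fun i : idx 2 2 => (idx_snd i ord0 != idx_snd i ord_max)%:R).
Proof.
rewrite /disagreement_op Ccost_coord_proj; congr diagop; apply/funext => i.
by rewrite /disagreement_cost !mxE /label !ffunE sqr_sub_ord2 rmorph_nat.
Qed.

Lemma trace_diag_copies_disagreement pi :
  optrace (opmul (diag_copies 2 pi) disagreement_op) = 0.
Proof.
rewrite disagreement_opE trace_diag_copies big1 // => p _.
by rewrite !ffunE eqxx mulr0.
Qed.

Lemma trace_tenspow_disagreement Pi : couplings rho_mixed omega_pure Pi ->
  optrace (opmul (@tenspow R 2 2 Pi) disagreement_op) = half.
Proof.
move=> [_ [_ Pi_H]].
rewrite disagreement_opE.
rewrite (trace_tenspow_diagop_snd _ (fun s : {ffun 'I_2 -> 'I_2} => (s ord0 != s ord_max)%:R)).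
rewrite Pi_H /rho_mixed optr_diagop.
have diag_half (x : 'I_2) : diagop (fun=> half) x x = half by rewrite /diagop eqxx mul1r.
under eq_bigr do under eq_bigr do rewrite diag_half.
under eq_bigr do rewrite prodr_const card_ord.
rewrite -big_distrr sum_ffun_ord2 !sum_ord2 !ffunE /= add0r addr0.
by rewrite expr2 -mulrA mulrDr mulr1 half_add mulr1.
Qed.

Lemma value_free_disagreement : value_free rho_mixed omega_pure disagreement_op <= 0.
Proof.
have [G_state G_odd G_even] := diag_copies_feasible 2 pi_product_ge0 pi_product_coupling.
have := value_free_le (Cc := disagreement_op) G_state G_odd G_even.
by rewrite trace_diag_copies_disagreement; apply.
Qed.

Lemma value_prod_disagreement : 2^-1 <= value_prod rho_mixed omega_pure disagreement_op.
Proof.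
apply: value_prod_ge pi_product_coupling _ => Pi Pi_coupling.
by rewrite trace_tenspow_disagreement.
Qed.

End Example.

Theorem proposition2p6 (R : realType) :
  exists (n K : nat) (A : 'I_K -> Op R 'I_n) (c : ('rV[R]_K * 'rV[R]_K)%type -> R)
         (rho omega : Op R 'I_n),
    (0 < n)%N /\
    (forall k, selfadjoint (A k)) /\
    (forall z, 0 <= c z) /\
    lower_semicontinuous (fun z : ('rV[R]_K * 'rV[R]_K)%type => (c z)%:E) /\
    is_state rho /\ is_state omega /\
    exists (lam : 'I_K -> 'I_n -> R) (P : 'I_K -> 'I_n -> Op R 'I_n),
      (forall k, spectral_resolution (A k) (lam k) (P k)) /\
      value_free rho omega (Ccost lam P c) < value_prod rho omega (Ccost lam P c).
Proof.
exists 2%N, 2%N, (label_obs R), (@disagreement_cost R), (rho_mixed R), (omega_pure R).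
split; first by [].
split; first by move=> k; exact: diagop_real_selfadjoint.
split; first exact: disagreement_cost_ge0.
split; first exact/continuous_lower_semicontinuous/disagreement_cost_continuous.
split; first exact: rho_mixed_state.
split; first exact: omega_pure_state.
exists (label R), (fun=> @coord_proj R 2).
split; first by move=> k; exact: diagop_spectral_resolution.
apply: le_lt_trans (value_free_disagreement R) _.
by apply: lt_le_trans (value_prod_disagreement R); rewrite invr_gt0 ltr0n.
Qed.
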